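(* Let $a\ge 0$ and let $h$ be as defined in the context. Then for every $x\in[a-1,a+1]$, \[\log h(x)=\log h(a)+\sum_{k=1}^\infty\frac{(-1)^{k-1}}{k}\left(\sum_{n=2}^\infty\frac{u_n}{(n+a)^k}\right)(x-a)^k.\]
   Context: Let $u_n=(-1)^{s_2(n)}$, where $s_2(n)$ is the sum of the binary digits of the non-negative integer $n$ (Thue–Morse sequence with values $\pm1$). For real $x>-2$ define $h(x)=\prod_{n=1}^\infty\left(\frac{2n+x}{2n+1+x}\right)^{u_n}$ (limit of partial products; it converges and is positive). *)

From Stdlib Require Import Reals ZArith.
From Coquelicot Require Import Coquelicot.
Open Scope R_scope.

Fixpoint pos_popcount (p : positive) : nat :=
  match p with
  | xH => 1%nat
  | xO q => pos_popcount q
  | xI q => S (pos_popcount q)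
  end.

Definition s2 (n : nat) : nat :=
  match N.of_nat n with
  | N0 => 0%nat
  | Npos p => pos_popcount p
  end.

(* Thue--Morse sequence with values +-1 *)
Definition u (n : nat) : R := (-1) ^ (s2 n).

Fixpoint hpart (N : nat) (x : R) : R :=
  match N with
  | O => 1
  | S M => hpart M x *
      Rpower ((2 * INR (S M) + x) / (2 * INR (S M) + 1 + x)) (u (S M))
  end.

Definition h (x : R) : R := real (Lim_seq (fun N => hpart N x)).

From Stdlib Require Import Reals NArith Lia Lra.
From Coquelicot Require Import Coquelicot.
Open Scope R_scope.

(* Since u_(2n) = u_n and u_(2n+1) = -u_n, the logarithm of the n-th factor of h(y) is
   u_(2n) ln(2n+y) + u_(2n+1) ln(2n+1+y); hence log h(x) - log h(a) = sum_(m>=2) u_m ln(1 + z_m)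
   with z_m = (x-a)/(m+a) and |z_m| <= 1/2.  Expanding each ln(1 + z_m) in its Taylor series and
   exchanging the two sums is legitimate because the remainder after J terms is at most
   2^(1-J) z_m^2, which is summable in m and tends to 0 with J.  The inner series converge by
   Dirichlet's test, the partial sums of u being bounded. *)

Lemma u_double n : u (2 * n) = u n.
Proof. unfold u, s2. rewrite Nat2N.inj_double. now destruct (N.of_nat n). Qed.

Lemma u_succ_double n : u (S (2 * n)) = - u n.
Proof. unfold u, s2. rewrite Nat2N.inj_succ_double. destruct (N.of_nat n); simpl; ring. Qed.

Lemma Rabs_u n : Rabs (u n) = 1.
Proof. apply pow_1_abs. Qed.

Lemma is_series_R_iff (a : nat -> R) (l : R) : is_series a l <-> is_lim_seq (sum_n a) l.
Proof. reflexivity. Qed.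

Lemma sum_Sn_R (a : nat -> R) n : sum_n a (S n) = sum_n a n + a (S n).
Proof. exact (sum_Sn a n). Qed.

Lemma ex_series_le_R (a b : nat -> R) :
  (forall n, Rabs (a n) <= b n) -> ex_series b -> ex_series a.
Proof. exact (@ex_series_le _ R_CompleteNormedModule a b). Qed.

Lemma sum_n_pairs (b : nat -> R) k :
  sum_n b (S (2 * k)) = sum_n (fun p => b (2 * p)%nat + b (S (2 * p))) k.
Proof.
  induction k as [|k IH].
  - rewrite sum_Sn, !sum_O. reflexivity.
  - replace (S (2 * S k)) with (S (S (S (2 * k)))) by lia.
    rewrite (sum_Sn_R _ (S (S (2 * k)))), (sum_Sn_R _ (S (2 * k))), IH, (sum_Sn_R _ k).
    replace (S (S (2 * k))) with (2 * S k)%nat by lia.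
    apply Rplus_assoc.
Qed.

Lemma sum_u_bound n : Rabs (sum_n u n) <= 1.
Proof.
  assert (Hodd : forall k, sum_n u (S (2 * k)) = 0).
  { intro k. rewrite sum_n_pairs, <- (Rmult_0_r (INR (S k))), <- sum_n_const.
    apply sum_n_ext. intro p. change (u (2 * p) + u (S (2 * p)) = 0).
    rewrite u_double, u_succ_double. ring. }
  destruct (Nat.Even_or_Odd n) as [[k ->]|[k ->]].
  - assert (H := sum_Sn_R u (2 * k)). rewrite Hodd, u_succ_double in H.
    replace (sum_n u (2 * k)) with (u k) by lra.
    rewrite Rabs_u. lra.
  - rewrite Nat.add_1_r, Hodd, Rabs_R0. lra.
Qed.

Lemma sum_u_shift_bound k n : Rabs (sum_n (fun m => u (m + k)) n) <= 3.
Proof.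
  assert (E : sum_n u (n + k) - sum_n u k + u k = sum_n (fun m => u (m + k)) n).
  { induction n as [|n IH].
    - rewrite sum_O. simpl. ring.
    - rewrite sum_Sn_R, <- IH. replace (S n + k)%nat with (S (n + k)) by lia.
      rewrite sum_Sn_R. ring. }
  rewrite <- E.
  pose proof (sum_u_bound (n + k)). pose proof (sum_u_bound k). pose proof (Rabs_u k).
  pose proof (Rabs_triang (sum_n u (n + k) - sum_n u k) (u k)).
  pose proof (Rabs_triang (sum_n u (n + k)) (- sum_n u k)).
  rewrite Rabs_Ropp in *. unfold Rminus in *. lra.
Qed.

Lemma is_series_telescope (b : nat -> R) (l : R) :
  is_lim_seq b l -> is_series (fun n => b n - b (S n)) (b O - l).
Proof.
  intro Hb. apply is_series_R_iff, (is_lim_seq_ext (fun n => b O - b (S n))).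
  { induction n as [|n IH].
    - now rewrite sum_O.
    - rewrite sum_Sn_R, <- IH. ring. }
  apply (is_lim_seq_minus' (fun _ => b O)); [apply is_lim_seq_const|].
  now apply is_lim_seq_incr_1 in Hb.
Qed.

Lemma ex_series_mult_u_shift k (a : nat -> R) :
  is_lim_seq a 0 -> (forall n, a (S n) <= a n) -> ex_series (fun n => a n * u (n + k)).
Proof.
  intros Hlim Hmono. apply (partial_summation_R a (fun n => u (n + k))).
  - exists 3. apply sum_u_shift_bound.
  - exact Hlim.
  - apply (ex_series_ext (fun n => a n - a (S n))).
    + intro n. change (a n - a (S n) = Rabs (a (S n) - a n)).
      rewrite Rabs_left1; [ring | specialize (Hmono n); lra].
    + eexists. apply is_series_telescope, Hlim.
Qed.

Lemma is_lim_seq_inv_INR_plus c : 0 < c -> is_lim_seq (fun n => / (INR n + c)) 0.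
Proof.
  intro Hc. apply (is_lim_seq_inv _ p_infty); [|discriminate].
  apply (is_lim_seq_plus _ _ p_infty c);
    [apply is_lim_seq_INR | apply is_lim_seq_const | constructor].
Qed.

Lemma is_lim_seq_pow_0 (v : nat -> R) k :
  is_lim_seq v 0 -> is_lim_seq (fun n => v n ^ S k) 0.
Proof.
  intro Hv. induction k as [|k IH].
  - apply (is_lim_seq_ext v); [intro; ring | exact Hv].
  - rewrite <- (Rmult_0_l 0). apply (is_lim_seq_mult' v); assumption.
Qed.

Lemma ex_series_inv_sqr : ex_series (fun n => / (INR n + 1) ^ 2).
Proof.
  set (t := fun n => / (INR n + 1) - / (INR (S n) + 1)).
  apply (ex_series_le_R _ (fun n => 2 * t n)).
  - intro n. unfold t. pose proof (pos_INR n).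
    rewrite S_INR, Rabs_pos_eq by (left; apply Rinv_0_lt_compat, pow_lt; lra).
    assert (E : 2 * (/ (INR n + 1) - / (INR n + 1 + 1)) - / (INR n + 1) ^ 2
                = INR n / ((INR n + 1) ^ 2 * (INR n + 2))) by (field; lra).
    assert (0 <= INR n / ((INR n + 1) ^ 2 * (INR n + 2))) by (apply Rdiv_le_0_compat; nra).
    lra.
  - apply (ex_series_scal_l 2 t). eexists.
    apply (is_series_telescope (fun n => / (INR n + 1)) 0), is_lim_seq_inv_INR_plus. lra.
Qed.

Lemma ex_series_of_approx (g f b : nat -> R) (c : R) :
  ex_series f -> ex_series b -> (forall m, Rabs (g m - f m) <= c * b m) -> ex_series g.
Proof.
  intros Hf Hb Hgf.
  apply (ex_series_ext (fun m => f m + (g m - f m))); [intro; apply Rplus_minus|].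
  apply (ex_series_plus f); [exact Hf|].
  apply (ex_series_le_R _ (fun m => c * b m)); [exact Hgf | apply (ex_series_scal_l c b), Hb].
Qed.

Lemma Rabs_Series_le (a b : nat -> R) :
  (forall n, Rabs (a n) <= b n) -> ex_series b -> Rabs (Series a) <= Series b.
Proof.
  intros Hab Hb. eapply Rle_trans; [apply Series_Rabs|].
  - apply (ex_series_le_R _ b); [|exact Hb].
    intro n. rewrite Rabs_Rabsolu. apply Hab.
  - apply Series_le; [|exact Hb]. intro n. split; [apply Rabs_pos | apply Hab].
Qed.

Lemma is_series_interchange (f : nat -> nat -> R) (g b eps : nat -> R) :
  ex_series g -> (forall j, ex_series (f j)) -> ex_series b -> is_lim_seq eps 0 ->
  (forall J m, Rabs (g m - sum_n (fun j => f j m) J) <= eps J * b m) ->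
  is_series (fun j => Series (f j)) (Series g).
Proof.
  intros Hg Hf Hb Heps Herr.
  set (S_J := fun J => sum_n (fun j => Series (f j)) J).
  assert (Hpart : forall J, ex_series (fun m => sum_n (fun j => f j m) J) /\
                            S_J J = Series (fun m => sum_n (fun j => f j m) J)).
  { induction J as [|J [Hex HS]].
    - unfold S_J. rewrite sum_O.
      split; [apply (ex_series_ext (f O)) | apply Series_ext]; intros; rewrite ?sum_O; auto.
    - assert (E : forall m, sum_n (fun j => f j m) J + f (S J) m = sum_n (fun j => f j m) (S J))
        by (intro; symmetry; apply sum_Sn_R).
      split.
      + apply (ex_series_ext _ _ E), (ex_series_plus _ (f (S J))); auto.
      + unfold S_J. rewrite sum_Sn_R. fold (S_J J).
        rewrite HS, <- (Series_ext _ _ E), Series_plus; auto. }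
  assert (Hclose : forall J, Rabs (Series g - S_J J) <= eps J * Series b).
  { intro J. destruct (Hpart J) as [Hex ->].
    rewrite <- Series_minus, <- Series_scal_l by assumption.
    apply Rabs_Series_le; [apply Herr | apply (ex_series_scal_l (eps J) b), Hb]. }
  assert (Hlim : is_lim_seq (fun J => Series g - S_J J) 0).
  { apply is_lim_seq_abs_0, (is_lim_seq_le_le (fun _ => 0) _ (fun J => eps J * Series b)).
    - intro J. split; [apply Rabs_pos | apply Hclose].
    - apply is_lim_seq_const.
    - rewrite <- (Rmult_0_l (Series b)). apply (is_lim_seq_scal_r _ _ 0), Heps. }
  apply is_series_R_iff. rewrite <- (Rminus_0_r (Series g)).
  apply (is_lim_seq_ext (fun J => Series g - (Series g - S_J J))); [intro; unfold S_J; ring|].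
  apply (is_lim_seq_minus' (fun _ => Series g)); [apply is_lim_seq_const | exact Hlim].
Qed.

Lemma is_series_pairs (b : nat -> R) (l : R) :
  is_series b l -> is_series (fun p => b (2 * p)%nat + b (S (2 * p))) l.
Proof.
  intro Hb. apply is_series_R_iff, (is_lim_seq_ext (fun p => sum_n b (S (2 * p)))).
  - intro p. apply sum_n_pairs.
  - apply (is_lim_seq_subseq (sum_n b) l (fun p => S (2 * p))); [|exact Hb].
    apply eventually_subseq. intro n. lia.
Qed.

Definition ln1p_taylor (J : nat) (z : R) : R :=
  sum_n (fun j => (-1) ^ j / INR (S j) * z ^ S j) J.

Lemma is_derive_ln1p_taylor J z :
  is_derive (ln1p_taylor J) z (sum_n (fun j => (-z) ^ j) J).
Proof.
  apply (is_derive_sum_n (fun j t => (-1) ^ j / INR (S j) * t ^ S j)). intros k _.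
  replace ((-z) ^ k) with ((-1) ^ k / INR (S k) * (INR (S k) * 1 * z ^ Nat.pred (S k))).
  - apply is_derive_scal, (is_derive_pow (fun t => t) (S k) z 1 (is_derive_id z)).
  - replace (-z) with (-1 * z) by ring. rewrite Rpow_mult_distr. simpl Nat.pred.
    field. apply not_0_INR. lia.
Qed.

Lemma alt_geom_sum J z : (1 + z) * sum_n (fun j => (-z) ^ j) J = 1 - (-z) ^ S J.
Proof.
  induction J as [|J IH].
  - rewrite sum_O. simpl. ring.
  - rewrite sum_Sn_R, Rmult_plus_distr_l, IH. simpl. ring.
Qed.

(* Mean value theorem, the derivative of the error being (-c)^(J+1) / (1 + c). *)
Lemma ln1p_taylor_error J z :
  Rabs z <= / 2 -> Rabs (ln (1 + z) - ln1p_taylor J z) <= 2 * Rabs z ^ S (S J).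
Proof.
  intro Hz.
  set (F := fun t => ln (1 + t) - ln1p_taylor J t).
  assert (HF' : forall c, Rabs (c - 0) <= / 2 -> is_derive F c ((-c) ^ S J / (1 + c))).
  { intros c Hc. rewrite Rminus_0_r in Hc. apply Rabs_le_between in Hc.
    replace ((-c) ^ S J / (1 + c)) with (/ (1 + c) - sum_n (fun j => (-c) ^ j) J).
    - apply (is_derive_minus (fun t => ln (1 + t))); [|apply is_derive_ln1p_taylor].
      auto_derive; [lra | ring].
    - apply (Rmult_eq_reg_l (1 + c)); [|lra].
      rewrite Rmult_minus_distr_l, alt_geom_sum. field. lra. }
  assert (HF0 : F 0 = 0).
  { unfold F, ln1p_taylor.
    rewrite Rplus_0_r, ln_1, (sum_n_ext _ (fun _ => 0)), sum_n_const; [ring|].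
    intro j. simpl. ring. }
  destruct (MVT_cor4 F _ 0 (/ 2) HF' z) as [c [Hc Hcz]]; [now rewrite Rminus_0_r|].
  rewrite HF0, !Rminus_0_r in Hc. rewrite !Rminus_0_r in Hcz. fold (F z). rewrite Hc.
  assert (Hc2 : - / 2 <= c <= / 2) by (apply Rabs_le_between; lra).
  rewrite Rabs_mult, Rabs_div, <- RPow_abs, Rabs_Ropp, (Rabs_pos_eq (1 + c)) by lra.
  assert (Hpow : Rabs c ^ S J <= Rabs z ^ S J)
    by (apply pow_incr; split; [apply Rabs_pos | exact Hcz]).
  assert (Hinv : / (1 + c) <= 2) by (rewrite <- (Rinv_inv 2); apply Rinv_le_contravar; lra).
  apply (Rle_trans _ (Rabs z ^ S J * 2 * Rabs z)); [|right; simpl; ring].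
  apply Rmult_le_compat_r; [apply Rabs_pos|].
  apply Rmult_le_compat;
    [apply pow_le, Rabs_pos | left; apply Rinv_0_lt_compat; lra | exact Hpow | exact Hinv].
Qed.

Definition h_log_term (y : R) (n : nat) : R :=
  u (S n) * ln ((2 * INR (S n) + y) / (2 * INR (S n) + 1 + y)).

Lemma hpart_S_exp y n : hpart (S n) y = exp (sum_n (h_log_term y) n).
Proof.
  induction n as [|n IH].
  - rewrite sum_O. simpl hpart. unfold Rpower, h_log_term. apply Rmult_1_l.
  - change (hpart (S (S n)) y) with (hpart (S n) y *
      Rpower ((2 * INR (S (S n)) + y) / (2 * INR (S (S n)) + 1 + y)) (u (S (S n)))).
    rewrite IH, sum_Sn_R, exp_plus. reflexivity.
Qed.

Lemma ex_series_h_log_term y : -2 < y -> ex_series (h_log_term y).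
Proof.
  intro Hy.
  assert (Hpos : forall n, 0 < 2 * INR (S n) + y)
    by (intro n; rewrite S_INR; pose proof (pos_INR n); lra).
  set (a := fun n => ln (1 + / (2 * INR (S n) + y))).
  assert (E : forall n, -1 * (a n * u (n + 1)) = h_log_term y n).
  { intro n. unfold a, h_log_term. rewrite Nat.add_1_r.
    specialize (Hpos n). pose proof (Rinv_0_lt_compat _ Hpos).
    replace ((2 * INR (S n) + y) / (2 * INR (S n) + 1 + y))
      with (/ (1 + / (2 * INR (S n) + y))) by (field; lra).
    rewrite ln_Rinv by lra. ring. }
  apply (ex_series_ext _ _ E), (ex_series_scal_l (-1) (fun n => a n * u (n + 1))).
  apply ex_series_mult_u_shift.
  - apply (is_lim_seq_le_le (fun _ => 0) _ (fun n => / 2 * / (INR n + (1 + y / 2)))).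
    + intro n. specialize (Hpos n). pose proof (Rinv_0_lt_compat _ Hpos). unfold a. split.
      * rewrite <- ln_1. apply ln_le; lra.
      * replace (/ 2 * / (INR n + (1 + y / 2))) with (/ (2 * INR (S n) + y))
          by (rewrite S_INR in *; field; lra).
        apply (Rle_trans _ (ln (exp (/ (2 * INR (S n) + y))))); [|rewrite ln_exp; lra].
        apply ln_le; [lra | apply exp_ineq1_le].
    + apply is_lim_seq_const.
    + rewrite <- (Rmult_0_r (/ 2)).
      apply (is_lim_seq_scal_l _ (/ 2) 0), is_lim_seq_inv_INR_plus. lra.
  - intro n. unfold a. pose proof (Hpos n). pose proof (Rinv_0_lt_compat _ (Hpos (S n))).
    apply ln_le; [lra|]. apply Rplus_le_compat_l, Rinv_le_contravar; [apply Hpos|].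
    rewrite (S_INR (S n)). lra.
Qed.

Lemma h_exp_Series y : -2 < y -> h y = exp (Series (h_log_term y)).
Proof.
  intro Hy. unfold h. rewrite <- Lim_seq_incr_1, (Lim_seq_ext _ _ (hpart_S_exp y)).
  rewrite (is_lim_seq_unique _ (exp (Series (h_log_term y)))); [reflexivity|].
  apply (filterlim_comp _ _ _ (sum_n (h_log_term y)) exp
           eventually (locally (Series (h_log_term y)))).
  - apply Series_correct, ex_series_h_log_term, Hy.
  - apply continuous_exp.
Qed.

Lemma Series_u_ln_ratio x a : -2 < x -> -2 < a ->
  ex_series (fun m => u (m + 2) * (ln (INR (m + 2) + x) - ln (INR (m + 2) + a))) ->
  Series (fun m => u (m + 2) * (ln (INR (m + 2) + x) - ln (INR (m + 2) + a)))
  = ln (h x) - ln (h a).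
Proof.
  intros Hx Ha HG.
  set (G := fun m => u (m + 2) * (ln (INR (m + 2) + x) - ln (INR (m + 2) + a))).
  assert (E : forall p, G (2 * p)%nat + G (S (2 * p)) = h_log_term x p - h_log_term a p).
  { intro p. unfold G, h_log_term.
    replace (2 * p + 2)%nat with (2 * S p)%nat by lia.
    replace (S (2 * p) + 2)%nat with (S (2 * S p)) by lia.
    rewrite u_double, u_succ_double, S_INR, mult_INR.
    assert (1 <= INR (S p)) by (rewrite S_INR; pose proof (pos_INR p); lra).
    replace (INR 2) with 2 by (simpl; ring).
    rewrite !ln_div by lra. ring. }
  rewrite (h_exp_Series x Hx), (h_exp_Series a Ha), !ln_exp.
  rewrite <- Series_minus by (apply ex_series_h_log_term; lra).
  symmetry. apply is_series_unique, (is_series_ext _ _ _ E), is_series_pairs, Series_correct, HG.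
Qed.

Lemma INR_add_2 m : INR (m + 2) = INR m + 2.
Proof. rewrite plus_INR. simpl. ring. Qed.

Lemma ex_series_Thue_Morse_coef a k : -2 < a -> (1 <= k)%nat ->
  ex_series (fun m => u (m + 2) / (INR (m + 2) + a) ^ k).
Proof.
  intros Ha Hk. destruct k as [|k]; [lia|].
  assert (E : forall m, (/ (INR m + (2 + a))) ^ S k * u (m + 2)
                        = u (m + 2) / (INR (m + 2) + a) ^ S k).
  { intro m. rewrite INR_add_2, pow_inv, Rplus_assoc. apply Rmult_comm. }
  apply (ex_series_ext _ _ E), ex_series_mult_u_shift.
  - apply is_lim_seq_pow_0, is_lim_seq_inv_INR_plus. lra.
  - intro n. pose proof (pos_INR n). apply pow_incr. split.
    + left. apply Rinv_0_lt_compat. rewrite S_INR. lra.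
    + apply Rinv_le_contravar; rewrite ?S_INR; lra.
Qed.

(* The index [m] stands for [m + 2] in the informal statement. *)
Definition rel_increment (a x : R) (m : nat) : R := (x - a) / (INR (m + 2) + a).

Definition taylor_term (a x : R) (j m : nat) : R :=
  u (m + 2) * ((-1) ^ j / INR (S j) * rel_increment a x m ^ S j).

Lemma ln_1p_rel_increment a x m : -2 < a -> -2 < x ->
  ln (1 + rel_increment a x m) = ln (INR (m + 2) + x) - ln (INR (m + 2) + a).
Proof.
  intros Ha Hx. unfold rel_increment. rewrite INR_add_2. pose proof (pos_INR m).
  rewrite <- ln_div by lra. f_equal. field. lra.
Qed.

Lemma Rabs_rel_increment_le a x m : 0 <= a -> Rabs (x - a) <= 1 ->
  Rabs (rel_increment a x m) <= / (INR m + 2).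
Proof.
  intros Ha Hxa. unfold rel_increment, Rdiv. rewrite INR_add_2. pose proof (pos_INR m).
  rewrite Rabs_mult, (Rabs_pos_eq (/ _)) by (left; apply Rinv_0_lt_compat; lra).
  rewrite <- (Rmult_1_l (/ (INR m + 2))).
  apply Rmult_le_compat; [apply Rabs_pos | left; apply Rinv_0_lt_compat; lra | exact Hxa |].
  apply Rinv_le_contravar; lra.
Qed.

Lemma taylor_term_error a x J m : 0 <= a -> Rabs (x - a) <= 1 ->
  Rabs (u (m + 2) * ln (1 + rel_increment a x m) - sum_n (fun j => taylor_term a x j m) J)
  <= 2 * (/ 2) ^ J * / (INR m + 1) ^ 2.
Proof.
  intros Ha Hxa. unfold taylor_term. set (z := rel_increment a x m).
  rewrite (sum_n_mult_l (K := R_Ring)). change mult with Rmult. fold (ln1p_taylor J z).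
  rewrite <- Rmult_minus_distr_l, Rabs_mult, Rabs_u, Rmult_1_l.
  pose proof (pos_INR m). pose proof (Rabs_pos z).
  assert (Hz : Rabs z <= / (INR m + 2)) by now apply Rabs_rel_increment_le.
  assert (Hz2 : Rabs z <= / 2) by (apply (Rle_trans _ _ _ Hz), Rinv_le_contravar; lra).
  assert (Hz1 : Rabs z <= / (INR m + 1)) by (apply (Rle_trans _ _ _ Hz), Rinv_le_contravar; lra).
  apply (Rle_trans _ _ _ (ln1p_taylor_error J z Hz2)).
  replace (Rabs z ^ S (S J)) with (Rabs z ^ J * Rabs z ^ 2) by (simpl; ring).
  rewrite Rmult_assoc, <- pow_inv. apply Rmult_le_compat_l; [lra|].
  apply Rmult_le_compat; try apply pow_le; try apply pow_incr; lra.
Qed.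

Lemma Series_taylor_term a x j : -2 < a ->
  ex_series (taylor_term a x j) /\
  Series (taylor_term a x j)
  = (-1) ^ j / INR (S j) * Series (fun m => u (m + 2) / (INR (m + 2) + a) ^ S j) * (x - a) ^ S j.
Proof.
  intro Ha.
  set (c := (-1) ^ j / INR (S j) * (x - a) ^ S j).
  assert (E : forall m, c * (u (m + 2) / (INR (m + 2) + a) ^ S j) = taylor_term a x j m).
  { intro m. unfold c, taylor_term, rel_increment, Rdiv. rewrite Rpow_mult_distr, pow_inv. ring. }
  split.
  - apply (ex_series_ext _ _ E).
    apply (ex_series_scal_l c (fun m => u (m + 2) / (INR (m + 2) + a) ^ S j)).
    apply ex_series_Thue_Morse_coef; [exact Ha | lia].
  - rewrite <- (Series_ext _ _ E), Series_scal_l. unfold c. ring.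
Qed.

Theorem theorem5 (a x : R) (ha : 0 <= a) (hx : a - 1 <= x <= a + 1) :
  (forall k : nat, (1 <= k)%nat ->
     ex_series (fun m : nat => u (m + 2) / (INR (m + 2) + a) ^ k)) /\
  is_series
    (fun j : nat =>
       (-1) ^ j / INR (S j) *
       Series (fun m : nat => u (m + 2) / (INR (m + 2) + a) ^ (S j)) *
       (x - a) ^ (S j))
    (ln (h x) - ln (h a)).
Proof.
  assert (Ha : -2 < a) by lra. assert (Hx : -2 < x) by lra.
  assert (Hxa : Rabs (x - a) <= 1) by (apply Rabs_le_between; lra).
  split; [intros k Hk; now apply ex_series_Thue_Morse_coef|].
  set (g := fun m => u (m + 2) * ln (1 + rel_increment a x m)).
  set (b := fun m => / (INR m + 1) ^ 2).
  assert (Hf : forall j, ex_series (taylor_term a x j)) by (intro; apply Series_taylor_term, Ha).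
  assert (Herr : forall J m,
             Rabs (g m - sum_n (fun j => taylor_term a x j m) J) <= 2 * (/ 2) ^ J * b m)
    by (intros; apply taylor_term_error; assumption).
  assert (Hg : ex_series g).
  { apply (ex_series_of_approx g (taylor_term a x O) b (2 * (/ 2) ^ 0));
      [apply Hf | apply ex_series_inv_sqr|].
    intro m. specialize (Herr O m). rewrite sum_O in Herr. exact Herr. }
  assert (E : forall m, g m = u (m + 2) * (ln (INR (m + 2) + x) - ln (INR (m + 2) + a)))
    by (intro m; unfold g; rewrite ln_1p_rel_increment; auto).
  rewrite <- (Series_u_ln_ratio x a Hx Ha (ex_series_ext _ _ E Hg)), <- (Series_ext _ _ E).
  apply (is_series_ext (fun j => Series (taylor_term a x j)));
    [intro; apply Series_taylor_term, Ha|].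
  apply (is_series_interchange _ g b (fun J => 2 * (/ 2) ^ J));
    [exact Hg | exact Hf | apply ex_series_inv_sqr | | exact Herr].
  rewrite <- (Rmult_0_r 2). apply (is_lim_seq_scal_l _ 2 0), is_lim_seq_geom.
  rewrite Rabs_pos_eq; lra.
Qed.
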